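(* For $s,s'\in\mathbb C$ define $d_{s,s'}\colon G/M\to\mathbb C$ by $d_{s,s'}(gM)=q^{(\frac12+is)H(g)}q^{(\frac12+is')H(gr)}$. Then for all $g,g'\in G$ and $n\in\mathbb Z$: (i) $d_{s,s'}(g'gM)=q^{(\frac12+is)\langle g'o,g'g\omega_+\rangle}q^{(\frac12+is')\langle g'o,g'g\omega_-\rangle}d_{s,s'}(gM)$; (ii) $d_{s,s'}(g\tau^nM)=q^{n(\frac12+is)}q^{-n(\frac12+is')}d_{s,s'}(gM)$.
   Context: Let $q\ge2$ and $\mathfrak G$ the $(q+1)$-regular tree with vertex set $\mathfrak X$, graph distance $d$ and boundary $\Omega$ (infinite non-backtracking edge chains modulo eventual equality up to shift); $[x,\omega)$ is the ray from $x$ to $\omega$. Fix a vertex $o$ and $\omega_-\neq\omega_+\in\Omega$ with $o$ on the geodesic $]\omega_-,\omega_+[$. $\langle x,\omega\rangle=d(o,y)-d(x,y)$ where $[o,\omega)\cap[x,\omega)=[y,\omega)$. $G=\mathrm{Aut}(\mathfrak G)$, $K=\mathrm{Stab}_G(o)$, $B_{\omega_+}=\{g\in G:g\omega_+=\omega_+,\ g\text{ fixes some vertex}\}$, $\tau\in G$ a fixed automorphism fixing $\omega_\pm$ and translating $]\omega_-,\omega_+[$ one step towards $\omega_+$; each $g\in G$ is $g=kn\tau^j$ with $k\in K,n\in B_{\omega_+}$ and unique $j=:H(g)\in\mathbb Z$. $r\in K$ is fixed with $r^2=\mathrm{id}$, $r\tau^jr^{-1}=\tau^{-j}$. $M=\{\gamma\in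 K:\gamma$ fixes every vertex of $]\omega_-,\omega_+[\}$; $H(g)$ and $H(gr)$ depend only on $gM$. *)

From Stdlib Require Import Reals ZArith List ClassicalEpsilon.
From Coquelicot Require Import Coquelicot.
Import ListNotations.
Set Implicit Arguments.

Section Tree.
Variable V : Type.
Variable adj : V -> V -> Prop.

Inductive walk : V -> list V -> V -> Prop :=
| walk_nil : forall x, walk x [] x
| walk_cons : forall x z l y, adj x z -> walk z l y -> walk x (z :: l) y.

Definition reduced (s : list V) (d : V) : Prop :=
  forall i, (i + 2 < length s)%nat -> nth i s d <> nth (i + 2) s d.

Definition is_tree : Prop :=
  (forall x y, adj x y -> adj y x) /\
  (forall x, ~ adj x x) /\
  (forall x y, exists l, walk x l y) /\
  (forall x l, walk x l x -> reduced (x :: l) x -> l = []).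

Definition regular (k : nat) : Prop :=
  forall x, exists l, length l = k /\ NoDup l /\ (forall y, adj x y <-> In y l).

Definition is_dist (x y : V) (n : nat) : Prop :=
  (exists l, walk x l y /\ length l = n) /\ (forall l, walk x l y -> (n <= length l)%nat).
Definition dist (x y : V) : nat := epsilon (inhabits 0%nat) (is_dist x y).

Definition ray (u : nat -> V) : Prop :=
  forall n, adj (u n) (u (S n)) /\ u n <> u (S (S n)).
(* boundary points: rays modulo eventual equality up to shift *)
Definition bequiv (u w : nat -> V) : Prop :=
  exists k m, forall n, u (n + k)%nat = w (n + m)%nat.

Definition rayset (x : V) (om : nat -> V) (z : V) : Prop :=
  exists u, ray u /\ u 0%nat = x /\ bequiv u om /\ exists n, u n = z.

(* <x, omega> = d(o,y) - d(x,y) where [o,omega) ∩ [x,omega) = [y,omega) *)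
Definition busemann (o x : V) (om : nat -> V) : Z :=
  epsilon (inhabits 0%Z) (fun b => exists y,
    (forall z, (rayset o om z /\ rayset x om z) <-> rayset y om z) /\
    b = (Z.of_nat (dist o y) - Z.of_nat (dist x y))%Z).

Definition geodesic (gam : Z -> V) : Prop :=
  forall n, adj (gam n) (gam (n + 1)%Z) /\ gam n <> gam (n + 2)%Z.

Definition is_aut (g : V -> V) : Prop :=
  (forall x y, adj x y <-> adj (g x) (g y)) /\
  exists h : V -> V, (forall x, h (g x) = x) /\ (forall x, g (h x) = x).

Definition tpow (tau taui : V -> V) (j : Z) : V -> V :=
  match j with
  | Z0 => fun x => x
  | Zpos p => Nat.iter (Pos.to_nat p) tau
  | Zneg p => Nat.iter (Pos.to_nat p) taui
  end.

(* H(g): the unique j with g = k n tau^j, k in K = Stab(o),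
   n in B_{omega_+} (fixes omega_+ and some vertex) *)
Definition Hproj (o : V) (omp : nat -> V) (tau taui : V -> V) (g : V -> V) : Z :=
  epsilon (inhabits 0%Z) (fun j => exists k n,
    is_aut k /\ k o = o /\
    is_aut n /\ bequiv (fun m => n (omp m)) omp /\ (exists x, n x = x) /\
    forall x, g x = k (n (tpow tau taui j x))).

End Tree.

Definition cexp (z : C) : C := (exp (fst z) * cos (snd z), exp (fst z) * sin (snd z))%R.
Definition qpow (q : R) (z : C) (m : Z) : C := cexp (Cmult z (RtoC (IZR m * ln q)%R)).
Definition half_is (s : C) : C := Cplus (RtoC (1/2)%R) (Cmult Ci s).

(* d_{s,s'}(gM) = q^{(1/2+is)H(g)} q^{(1/2+is')H(gr)}, on representatives g *)
Definition dss (V : Type) (adj : V -> V -> Prop) (q : nat) (o : V) (omp : nat -> V)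
  (tau taui r : V -> V) (s s' : C) (g : V -> V) : C :=
  Cmult (qpow (INR q) (half_is s) (Hproj adj o omp tau taui g))
        (qpow (INR q) (half_is s') (Hproj adj o omp tau taui (fun x => g (r x)))).

(* H(g) is a horocyclic height: writing b for the Busemann cocycle of the end g w+, one has
   H(g) = b(o, g o).  Indeed k in K fixes o, n in B_{w+} fixes w+ and a vertex and hence every
   horocycle of w+, and tau^j moves o by j along the geodesic towards w+.  Conversely, regularity
   makes K transitive on the ends, so some k sends w+ to g w+; then n = k^-1 g tau^-j fixes w+
   with zero horocyclic shift, and such an automorphism fixes a vertex.  As r maps w+ to w-,
   H(g r) is the height with respect to g w-.  Then (i) is the cocycle identity
   b(o, g'g o) = b(o, g'o) + b(g'o, g'g o) combined with the invariance of b under g', and (ii)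
   holds because tau^n o lies n steps towards w+ and n steps away from w-. *)

From Pilot Require Import Defs.
From Stdlib Require Import Reals ZArith List.
From Coquelicot Require Import Coquelicot.
From Stdlib Require Import Lia Wf_nat ClassicalEpsilon Classical.
Import ListNotations.
Set Implicit Arguments.
Local Open Scope nat_scope.

Lemma least_nat {P : nat -> Prop} :
  (exists n, P n) -> exists n, P n /\ forall m, P m -> n <= m.
Proof.
  intros HP.
  destruct (dec_inh_nat_subset_has_unique_least_element P (fun n => classic (P n)) HP)
    as [n [[Pn Hn] _]].
  eauto.
Qed.

Section Chains.
Variable V : Type.
Variable adj : V -> V -> Prop.
Hypothesis tree : is_tree adj.
Local Notation dist := (Defs.dist adj).

Definition chain (f : nat -> V) (n : nat) : Prop :=
  forall i, i < n -> adj (f i) (f (S i)).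
Definition nonbacktracking (f : nat -> V) (n : nat) : Prop :=
  forall i, i + 2 <= n -> f i <> f (i + 2).
Definition chain_between (x y : V) (n : nat) : Prop :=
  exists f, f 0 = x /\ f n = y /\ chain f n.

Lemma adj_sym x y : adj x y -> adj y x.
Proof. destruct tree as [H _]. auto. Qed.

Lemma chain_le f n m : chain f n -> m <= n -> chain f m.
Proof. intros H Hm i Hi. apply H. lia. Qed.
Lemma nonbacktracking_le f n m : nonbacktracking f n -> m <= n -> nonbacktracking f m.
Proof. intros H Hm i Hi. apply H. lia. Qed.

Lemma chain_rev f n : chain f n -> chain (fun i => f (n - i)) n.
Proof.
  intros H i Hi. apply adj_sym. replace (n - i) with (S (n - S i)) by lia. apply H. lia.
Qed.

Lemma nonbacktracking_rev f n : nonbacktracking f n -> nonbacktracking (fun i => f (n - i)) n.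
Proof.
  intros H i Hi E. apply (H (n - (i + 2))); [lia|].
  replace (n - (i + 2) + 2) with (n - i) by lia. auto.
Qed.

Definition glue (f : nat -> V) (d : nat) (g : nat -> V) (i : nat) : V :=
  if i <=? d then f i else g (i - d).

Lemma glue_l f d g i : i <= d -> glue f d g i = f i.
Proof. intros Hi. unfold glue. destruct (Nat.leb_spec i d); [auto | lia]. Qed.

Lemma glue_r f d g i : f d = g 0 -> d <= i -> glue f d g i = g (i - d).
Proof.
  intros E Hi. unfold glue. destruct (Nat.leb_spec i d); auto.
  replace i with d by lia. rewrite Nat.sub_diag. auto.
Qed.

Lemma glue_chain f d g m : f d = g 0 -> chain f d -> chain g m -> chain (glue f d g) (d + m).
Proof.
  intros E Hf Hg i Hi. destruct (Nat.lt_ge_cases i d).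
  - rewrite !glue_l by lia. apply Hf. lia.
  - rewrite !glue_r by (auto; lia). replace (S i - d) with (S (i - d)) by lia. apply Hg. lia.
Qed.

Lemma glue_nonbacktracking f d g m : f d = g 0 ->
  nonbacktracking f d -> nonbacktracking g m ->
  (0 < d -> 0 < m -> f (d - 1) <> g 1) -> nonbacktracking (glue f d g) (d + m).
Proof.
  intros E Hf Hg Hjoin i Hi.
  destruct (Nat.le_gt_cases (i + 2) d); [|destruct (Nat.le_gt_cases d i)].
  - rewrite !glue_l by lia. apply Hf. lia.
  - rewrite !glue_r by (auto; lia). replace (i + 2 - d) with (i - d + 2) by lia. apply Hg. lia.
  - rewrite glue_l, glue_r by (auto; lia).
    replace i with (d - 1) by lia. replace (d - 1 + 2 - d) with 1 by lia. apply Hjoin; lia.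
Qed.

Definition edge (a b : V) (i : nat) : V := match i with 0 => a | _ => b end.

Lemma chain_edge a b : adj a b -> chain (edge a b) 1.
Proof. intros H [|i] Hi; [exact H | lia]. Qed.
Lemma nonbacktracking_edge a b : nonbacktracking (edge a b) 1.
Proof. intros i Hi. lia. Qed.

Lemma walk_chain x l y : walk adj x l y ->
  forall d, chain (fun i => nth i (x :: l) d) (length l) /\ nth (length l) (x :: l) d = y.
Proof.
  induction 1; intros d; simpl.
  - split; [intros i Hi; lia | auto].
  - destruct (IHwalk d) as [H1 H2]. split; auto.
    intros [|i] Hi; simpl; auto. apply H1. lia.
Qed.

Lemma walk_of_chain n : forall f, chain f n -> walk adj (f 0) (map f (seq 1 n)) (f n).
Proof.
  induction n; intros f Hf; simpl; constructor.
  - apply Hf. lia.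
  - rewrite <- seq_shift, map_map. apply (IHn (fun i => f (S i))).
    intros i Hi. apply Hf. lia.
Qed.

Lemma nth_map_seq (f : nat -> V) n i d : i <= n -> nth i (f 0 :: map f (seq 1 n)) d = f i.
Proof.
  intros Hi. change (f 0 :: map f (seq 1 n)) with (map f (seq 0 (S n))).
  rewrite (nth_indep _ d (f 0)) by (rewrite length_map, length_seq; lia).
  rewrite map_nth, seq_nth by lia. reflexivity.
Qed.

Lemma closed_nonbacktracking_chain f n :
  chain f n -> nonbacktracking f n -> f 0 = f n -> n = 0.
Proof.
  intros Hw Hr He. destruct tree as [_ [_ [_ Hcycle]]].
  assert (Hwalk := walk_of_chain Hw). rewrite <- He in Hwalk.
  assert (Hl : map f (seq 1 n) = []).
  { apply (Hcycle _ _ Hwalk). intros i Hi. simpl in Hi. rewrite length_map, length_seq in Hi.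
    rewrite !nth_map_seq by lia. apply Hr. lia. }
  apply (f_equal (@length V)) in Hl. rewrite length_map, length_seq in Hl. auto.
Qed.

Lemma chain_between_walk x y n : chain_between x y n <-> exists l, walk adj x l y /\ length l = n.
Proof.
  split.
  - intros [f [<- [<- Hw]]]. exists (map f (seq 1 n)).
    split; [apply walk_of_chain; auto | rewrite length_map, length_seq; auto].
  - intros [l [Hw <-]]. exists (fun i => nth i (x :: l) x).
    destruct (walk_chain Hw x) as [H1 H2]. auto.
Qed.

Lemma dist_spec x y : chain_between x y (dist x y) /\
  forall m, chain_between x y m -> dist x y <= m.
Proof.
  assert (Hconn : exists n, chain_between x y n).
  { destruct tree as [_ [_ [Hc _]]]. destruct (Hc x y) as [l Hl].
    exists (length l). apply chain_between_walk. eauto. }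
  destruct (least_nat Hconn) as [n [Hn Hmin]].
  assert (Hd : is_dist adj x y n).
  { split; [apply chain_between_walk; auto|].
    intros l Hl. apply Hmin, chain_between_walk. eauto. }
  destruct (epsilon_spec (inhabits 0) (is_dist adj x y) (ex_intro _ n Hd)) as [H1 H2].
  fold (dist x y) in H1, H2. split.
  - apply chain_between_walk. auto.
  - intros m Hm. apply chain_between_walk in Hm as [l [Hl <-]]. auto.
Qed.

Lemma dist_chain x y : chain_between x y (dist x y).
Proof. apply dist_spec. Qed.
Lemma dist_le_chain x y m : chain_between x y m -> dist x y <= m.
Proof. apply dist_spec. Qed.

Lemma dist_diag x : dist x x = 0.
Proof.
  enough (dist x x <= 0) by lia.
  apply dist_le_chain. exists (fun _ => x). repeat split. intros i Hi. lia.
Qed.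

Lemma dist_eq0 x y : dist x y = 0 -> x = y.
Proof. intros H. destruct (dist_chain x y) as [f [<- [<- _]]]. rewrite H. auto. Qed.

(* Removing a backtrack [f i = f (i + 2)] would give a chain two steps shorter. *)
Lemma shortest_chain x y : exists f, f 0 = x /\ f (dist x y) = y /\
  chain f (dist x y) /\ nonbacktracking f (dist x y).
Proof.
  destruct (dist_chain x y) as [f [H0 [Hn Hw]]]. exists f. repeat split; auto.
  intros i Hi Heq. set (d := dist x y) in *.
  set (g := fun j => if j <=? i then f j else f (j + 2)).
  enough (chain_between x y (d - 2)) by (apply dist_le_chain in H; lia).
  exists g. unfold g. repeat split.
  - auto.
  - destruct (Nat.leb_spec (d - 2) i).
    + replace (d - 2) with i by lia. rewrite Heq, <- Hn. f_equal. lia.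
    + rewrite <- Hn. f_equal. lia.
  - intros j Hj. destruct (Nat.leb_spec j i), (Nat.leb_spec (S j) i); try lia.
    + apply Hw. lia.
    + replace j with i by lia. rewrite Heq. replace (S i + 2) with (S (i + 2)) by lia.
      apply Hw. lia.
    + replace (S j + 2) with (S (j + 2)) by lia. apply Hw. lia.
Qed.

(* Otherwise [f] followed by [g] backwards would be a closed nonbacktracking chain. *)
Lemma nonbacktracking_last_step f g n m :
  chain f (S n) -> nonbacktracking f (S n) -> chain g (S m) -> nonbacktracking g (S m) ->
  f 0 = g 0 -> f (S n) = g (S m) -> f n = g m.
Proof.
  intros Hf Rf Hg Rg E0 En. apply NNPP. intros Hne.
  set (h := glue f (S n) (fun i => g (S m - i))).
  assert (Hh : S n + S m = 0).
  { apply (closed_nonbacktracking_chain (f := h)).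
    - apply glue_chain; [rewrite Nat.sub_0_r; auto | auto | apply chain_rev; auto].
    - apply glue_nonbacktracking;
        [rewrite Nat.sub_0_r; auto | auto | apply nonbacktracking_rev; auto |].
      intros _ _. simpl. rewrite !Nat.sub_0_r. auto.
    - unfold h. rewrite glue_l, glue_r by (try rewrite Nat.sub_0_r; auto; lia).
      replace (S m - (S n + S m - S n)) with 0 by lia. auto. }
  lia.
Qed.

Lemma nonbacktracking_unique n : forall m f g,
  chain f n -> nonbacktracking f n -> chain g m -> nonbacktracking g m ->
  f 0 = g 0 -> f n = g m -> n = m /\ forall i, i <= n -> f i = g i.
Proof.
  induction n as [|n IH]; intros m f g Hf Rf Hg Rg E0 En.
  - assert (m = 0) by (apply (closed_nonbacktracking_chain Hg Rg); congruence).
    subst m. split; auto. intros i Hi. replace i with 0 by lia. auto.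
  - destruct m as [|m].
    { assert (S n = 0) by (apply (closed_nonbacktracking_chain Hf Rf); congruence). lia. }
    assert (Elast : f n = g m) by (apply (nonbacktracking_last_step Hf Rf Hg Rg); auto).
    destruct (IH m f g) as [IH1 IH2]; auto;
      try (eapply chain_le || eapply nonbacktracking_le); eauto.
    split; [lia|]. intros i Hi.
    destruct (Nat.eq_dec i (S n)); [subst i; congruence | apply IH2; lia].
Qed.

Lemma nonbacktracking_dist f n : chain f n -> nonbacktracking f n -> dist (f 0) (f n) = n.
Proof.
  intros Hw Hr. destruct (shortest_chain (f 0) (f n)) as [g [G0 [Gn [Gw Gr]]]].
  destruct (nonbacktracking_unique Hw Hr Gw Gr) as [E _]; congruence.
Qed.

End Chains.

Section Rays.
Variable V : Type.
Variable adj : V -> V -> Prop.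
Hypothesis tree : is_tree adj.
Local Notation dist := (Defs.dist adj).

Lemma ray_chain u n : ray adj u -> chain adj u n.
Proof. intros H i _. apply H. Qed.
Lemma ray_nonbacktracking u n : ray adj u -> nonbacktracking u n.
Proof. intros H i _. replace (i + 2) with (S (S i)) by lia. apply H. Qed.

Lemma ray_of_chains u :
  (forall n, chain adj u n) -> (forall n, nonbacktracking u n) -> ray adj u.
Proof.
  intros Hc Hr n. split.
  - apply (Hc (S n)). lia.
  - replace (S (S n)) with (n + 2) by lia. apply (Hr (n + 2)). lia.
Qed.

Lemma ray_shift u k : ray adj u -> ray adj (fun i => u (k + i)).
Proof.
  intros H n. rewrite <- !plus_n_Sm. apply H.
Qed.

Lemma ray_dist u a b : ray adj u -> a <= b -> dist (u a) (u b) = b - a.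
Proof.
  intros H Hab.
  pose proof (nonbacktracking_dist tree (ray_chain (n := b - a) (ray_shift a H))
                (ray_nonbacktracking (n := b - a) (ray_shift a H))) as E.
  simpl in E. rewrite Nat.add_0_r, Nat.add_sub_assoc, Nat.add_comm, Nat.add_sub in E by lia.
  exact E.
Qed.

Lemma ray_unique u u' : ray adj u -> ray adj u' -> u 0 = u' 0 -> bequiv u u' ->
  forall i, u i = u' i.
Proof.
  intros Hu Hu' E0 [k [m H]].
  destruct (nonbacktracking_unique tree (ray_chain (n := k) Hu) (ray_nonbacktracking (n := k) Hu)
              (ray_chain (n := m) Hu') (ray_nonbacktracking (n := m) Hu') E0 (H 0)) as [<- E].
  intros i. destruct (Nat.le_gt_cases i k); auto.
  replace i with (i - k + k) by lia. apply H.
Qed.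

Lemma aut_inverse g : is_aut adj g ->
  exists h, is_aut adj h /\ (forall x, h (g x) = x) /\ (forall x, g (h x) = x).
Proof.
  intros [Ha [h [H1 H2]]]. exists h. repeat split; auto.
  - intros Hxy. apply Ha. rewrite !H2. auto.
  - intros Hxy. apply Ha in Hxy. rewrite !H2 in Hxy. auto.
  - exists g. auto.
Qed.

Lemma aut_id : is_aut adj (fun x => x).
Proof. split; [tauto | exists (fun x => x); auto]. Qed.

Lemma aut_comp g g' : is_aut adj g -> is_aut adj g' -> is_aut adj (fun x => g (g' x)).
Proof.
  intros [Ha [h [H1 H2]]] [Ha' [h' [H1' H2']]]. split.
  - intros x y. rewrite (Ha' x y), (Ha (g' x) (g' y)). tauto.
  - exists (fun x => h' (h x)). split; intros x; [rewrite H1 | rewrite H2']; auto.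
Qed.

Lemma aut_ray g u : is_aut adj g -> ray adj u -> ray adj (fun n => g (u n)).
Proof.
  intros [Ha [h [H1 H2]]] Hu n. destruct (Hu n) as [A B]. split.
  - apply (proj1 (Ha _ _)). auto.
  - intros E. apply B. rewrite <- (H1 (u n)), E. auto.
Qed.

Lemma aut_chain_between g x y n : is_aut adj g ->
  chain_between adj x y n -> chain_between adj (g x) (g y) n.
Proof.
  intros [Ha _] [f [<- [<- Hw]]]. exists (fun i => g (f i)). repeat split.
  intros i Hi. apply (proj1 (Ha _ _)). auto.
Qed.

Lemma aut_dist g x y : is_aut adj g -> dist (g x) (g y) = dist x y.
Proof.
  intros Hg. destruct (aut_inverse Hg) as [h [Hh [H1 _]]].
  apply Nat.le_antisymm; apply dist_le_chain; auto.
  - apply aut_chain_between; auto. apply dist_chain; auto.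
  - pose proof (aut_chain_between Hh (dist_chain tree (g x) (g y))) as Hc.
    rewrite !H1 in Hc. exact Hc.
Qed.

Lemma bequiv_ext (u w : nat -> V) : (forall n, u n = w n) -> bequiv u w.
Proof. intros H. exists 0, 0. auto. Qed.
Lemma bequiv_sym (u w : nat -> V) : bequiv u w -> bequiv w u.
Proof. intros [k [m H]]. exists m, k. auto. Qed.
Lemma bequiv_trans (u w z : nat -> V) : bequiv u w -> bequiv w z -> bequiv u z.
Proof.
  intros [k [m H]] [k' [m' H']]. exists (k + k'), (m + m'). intros n.
  replace (n + (k + k')) with (n + k' + k) by lia. rewrite H.
  replace (n + k' + m) with (n + m + k') by lia. rewrite H'. f_equal. lia.
Qed.
Lemma bequiv_shift (u : nat -> V) k : bequiv (fun i => u (k + i)) u.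
Proof. exists 0, k. intros n. f_equal. lia. Qed.
Lemma bequiv_map (f : V -> V) u w : bequiv u w -> bequiv (fun n => f (u n)) (fun n => f (w n)).
Proof. intros [k [m H]]. exists k, m. intros n. rewrite H. auto. Qed.

(* Follow a shortest chain from [x] to a nearest vertex of the ray, then the ray itself. *)
Lemma ray_to x w : ray adj w -> exists v, ray adj v /\ v 0 = x /\ bequiv v w.
Proof.
  intros Hw.
  destruct (@least_nat (fun d => exists N, dist x (w N) = d)) as [d [[N HN] Hmin]];
    [exists (dist x (w 0)), 0; reflexivity |].
  destruct (shortest_chain tree x (w N)) as [f [F0 [Fd [Fw Fr]]]]. rewrite HN in Fd, Fw, Fr.
  set (w' := fun i => w (N + i)).
  assert (Hw' : ray adj w') by apply (ray_shift N Hw).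
  assert (Ejoin : f d = w' 0) by (unfold w'; rewrite Nat.add_0_r; auto).
  exists (glue f d w'). split; [|split].
  - apply ray_of_chains; intros n;
      [apply (chain_le (n := d + n)) | apply (nonbacktracking_le (n := d + n))].
    + apply (glue_chain Ejoin Fw (ray_chain (n := n) Hw')).
    + lia.
    + apply (glue_nonbacktracking Ejoin Fr (ray_nonbacktracking (n := n) Hw')).
      intros Hd _ E. unfold w' in E.
      assert (Hshort : dist x (w (N + 1)) <= d - 1).
      { rewrite <- F0. apply dist_le_chain; auto.
        exists f. repeat split; auto. apply (chain_le Fw). lia. }
      assert (d <= dist x (w (N + 1))) by (apply Hmin; eauto). lia.
    + lia.
  - rewrite glue_l by lia. auto.
  - exists d, N. intros n. rewrite glue_r by (auto; lia). unfold w'. f_equal. lia.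
Qed.

Definition bfun (x : V) (w : nat -> V) : Z := epsilon (inhabits 0%Z)
  (fun e => exists N0, forall N, N0 <= N -> (Z.of_nat (dist x (w N)) - Z.of_nat N)%Z = e).

Lemma bfun_eq x w e :
  (exists N0, forall N, N0 <= N -> (Z.of_nat (dist x (w N)) - Z.of_nat N)%Z = e) -> bfun x w = e.
Proof.
  intros H.
  destruct (epsilon_spec (inhabits 0%Z) (fun e => exists N0, forall N, N0 <= N ->
              (Z.of_nat (dist x (w N)) - Z.of_nat N)%Z = e) (ex_intro _ e H)) as [N1 H1].
  fold (bfun x w) in H1.
  destruct H as [N0 H0]. rewrite <- (H1 (max N0 N1)) by lia. apply H0. lia.
Qed.

Lemma bfun_meet x u v a b : ray adj v -> v 0 = x -> (forall i, u (a + i) = v (b + i)) ->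
  bfun x u = (Z.of_nat b - Z.of_nat a)%Z.
Proof.
  intros Hv V0 Huv. apply bfun_eq. exists a. intros N HN.
  replace N with (a + (N - a)) by lia. rewrite Huv, <- V0, ray_dist by (auto; lia). lia.
Qed.

Lemma bfun_ray w a : ray adj w -> bfun (w a) w = (- Z.of_nat a)%Z.
Proof.
  intros Hw. rewrite (@bfun_meet _ w (fun i => w (a + i)) a 0).
  - lia.
  - apply ray_shift; auto.
  - rewrite Nat.add_0_r. auto.
  - auto.
Qed.

Lemma bfun_spec x w : ray adj w ->
  exists N0, forall N, N0 <= N -> (Z.of_nat (dist x (w N)) - Z.of_nat N)%Z = bfun x w.
Proof.
  intros Hw. destruct (ray_to x Hw) as [v [Hv [V0 [k [m H]]]]].
  assert (Hwv : forall i, w (m + i) = v (k + i)) by (intros i; rewrite !(Nat.add_comm _ i); auto).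
  rewrite (bfun_meet w m k Hv V0 Hwv). exists m. intros N HN.
  replace N with (m + (N - m)) by lia. rewrite Hwv, <- V0, ray_dist by (auto; lia). lia.
Qed.

Lemma bfun_bequiv x w w' k m : ray adj w -> (forall n, w (n + k) = w' (n + m)) ->
  bfun x w' = (bfun x w + Z.of_nat k - Z.of_nat m)%Z.
Proof.
  intros Hw H. destruct (bfun_spec x Hw) as [N0 H0]. apply bfun_eq.
  exists (N0 + m). intros N HN. replace N with (N - m + m) by lia. rewrite <- H.
  rewrite <- (H0 (N - m + k)) by lia. lia.
Qed.

Lemma bfun_aut g x w : is_aut adj g -> ray adj w -> bfun (g x) (fun n => g (w n)) = bfun x w.
Proof.
  intros Hg Hw. destruct (bfun_spec x Hw) as [N0 H0]. apply bfun_eq. exists N0.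
  intros N HN. rewrite aut_dist; auto.
Qed.

Definition bdiff (x z : V) (w : nat -> V) : Z := (bfun x w - bfun z w)%Z.

Lemma bdiff_split x y z w : bdiff x z w = (bdiff x y w + bdiff y z w)%Z.
Proof. unfold bdiff. lia. Qed.

Lemma bdiff_bequiv x z w w' : ray adj w -> bequiv w w' -> bdiff x z w' = bdiff x z w.
Proof.
  intros Hw [k [m H]]. unfold bdiff.
  rewrite (@bfun_bequiv x w w' k m Hw H), (@bfun_bequiv z w w' k m Hw H). lia.
Qed.

Lemma bdiff_aut g x z w : is_aut adj g -> ray adj w ->
  bdiff (g x) (g z) (fun n => g (w n)) = bdiff x z w.
Proof. intros. unfold bdiff. rewrite !bfun_aut; auto. Qed.

Lemma rayset_ray x w v : ray adj v -> v 0 = x -> bequiv v w ->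
  forall z, rayset adj x w z <-> exists i, v i = z.
Proof.
  intros Hv V0 Bv z. split.
  - intros [u [Hu [U0 [Bu [i <-]]]]]. exists i. symmetry.
    apply ray_unique; auto; [congruence | eapply bequiv_trans; eauto using bequiv_sym].
  - intros [i <-]. exists v. eauto.
Qed.

Lemma rayset_inj y y' w : ray adj w ->
  (forall z, rayset adj y w z <-> rayset adj y' w z) -> y = y'.
Proof.
  intros Hw Hyy'.
  destruct (ray_to y Hw) as [v [Hv [V0 Bv]]]. destruct (ray_to y' Hw) as [v' [Hv' [V0' Bv']]].
  assert (Hstart : forall x u, ray adj u -> u 0 = x -> bequiv u w -> rayset adj x w x)
    by (intros x u Hu U0 Bu; exists u; eauto).
  destruct (proj1 (rayset_ray Hv V0 Bv y') (proj2 (Hyy' y') (Hstart _ _ Hv' V0' Bv'))) as [i Hi].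
  destruct (proj1 (rayset_ray Hv' V0' Bv' y) (proj1 (Hyy' y) (Hstart _ _ Hv V0 Bv))) as [j Hj].
  assert (Hvv' : forall n, v' n = v (i + n)).
  { apply ray_unique; auto using ray_shift.
    - rewrite Nat.add_0_r. congruence.
    - eapply bequiv_trans; [exact Bv'|].
      apply bequiv_sym. eapply bequiv_trans; eauto using bequiv_shift. }
  assert (dist (v 0) (v (i + j)) = 0) by (rewrite <- Hvv', Hj, V0; apply dist_diag; auto).
  rewrite ray_dist in H by (auto; lia). replace i with 0 in Hi by lia. congruence.
Qed.

Lemma rayset_meet o x w u v a b :
  ray adj u -> u 0 = o -> bequiv u w -> ray adj v -> v 0 = x -> bequiv v w ->
  (forall i, u (a + i) = v (b + i)) -> (forall a' b', u a' = v b' -> a <= a') ->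
  forall z, (rayset adj o w z /\ rayset adj x w z) <-> rayset adj (u a) w z.
Proof.
  intros Hu U0 Bu Hv V0 Bv Huv Hmin z.
  rewrite (rayset_ray Hu U0 Bu), (rayset_ray Hv V0 Bv),
    (rayset_ray (ray_shift a Hu) (f_equal u (Nat.add_0_r a)) (bequiv_trans (bequiv_shift u a) Bu)).
  split.
  - intros [[i <-] [j Hj]]. assert (a <= i) by (apply (Hmin i j); auto).
    exists (i - a). f_equal. lia.
  - intros [i <-]. split; [exists (a + i) | exists (b + i)]; auto.
Qed.

Lemma busemann_confluence o x w y : ray adj w ->
  (forall z, (rayset adj o w z /\ rayset adj x w z) <-> rayset adj y w z) ->
  busemann adj o x w = (Z.of_nat (dist o y) - Z.of_nat (dist x y))%Z.
Proof.
  intros Hw Hy. unfold busemann.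
  match goal with |- epsilon ?i ?P = _ =>
    destruct (epsilon_spec i P (ex_intro _ _ (ex_intro _ y (conj Hy eq_refl))))
      as [y' [Hy' ->]] end.
  replace y' with y; [reflexivity|].
  apply (rayset_inj Hw). intros z. rewrite <- Hy, Hy'. reflexivity.
Qed.

Lemma busemann_bdiff o x w : ray adj w -> busemann adj o x w = bdiff o x w.
Proof.
  intros Hw.
  destruct (ray_to o Hw) as [u [Hu [U0 Bu]]].
  destruct (ray_to x Hw) as [v [Hv [V0 Bv]]].
  assert (Buv : bequiv u v) by (eapply bequiv_trans; eauto using bequiv_sym).
  destruct (@least_nat (fun a => exists b, u a = v b)) as [a [[b Hab] Hmin]].
  { destruct Buv as [k [m H]]. exists k, m. apply (H 0). }
  assert (Huv : forall i, u (a + i) = v (b + i)).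
  { apply ray_unique; auto using ray_shift.
    - rewrite !Nat.add_0_r. auto.
    - apply bequiv_trans with u; [apply bequiv_shift|].
      apply bequiv_trans with v; [exact Buv | apply bequiv_sym, bequiv_shift]. }
  rewrite (busemann_confluence Hw (@rayset_meet o x w u v a b Hu U0 Bu Hv V0 Bv Huv
                                     (fun a' b' E => Hmin a' (ex_intro _ b' E)))).
  rewrite (bdiff_bequiv o x Hu Bu). unfold bdiff.
  rewrite (@bfun_meet o u u 0 0 Hu U0 (fun i => eq_refl)), (@bfun_meet x u v a b Hv V0 Huv).
  rewrite Hab at 2. rewrite <- U0, <- V0, !ray_dist by (auto; lia). lia.
Qed.

End Rays.

Section ListBijections.
Variable V : Type.

Definition list_bij (l1 l2 : list V) (s : V -> V) : Prop :=
  (forall x, In x l1 -> In (s x) l2) /\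
  (forall x x', In x l1 -> In x' l1 -> s x = s x' -> x = x') /\
  (forall y, In y l2 -> exists x, In x l1 /\ s x = y).

Let eq_dec (a b : V) : {a = b} + {a <> b} := excluded_middle_informative _.

Lemma list_bij_exists l1 : forall l2, NoDup l1 -> NoDup l2 -> length l1 = length l2 ->
  exists s, list_bij l1 l2 s.
Proof.
  induction l1 as [|a l1 IH]; intros [|b l2] N1 N2 L; simpl in L; try discriminate.
  - exists (fun x => x). split; [|split]; simpl; tauto.
  - inversion N1 as [|? ? Na N1']; inversion N2 as [|? ? Nb N2']; subst.
    destruct (IH l2) as [s [S1 [S2 S3]]]; auto.
    exists (fun x => if eq_dec x a then b else s x). split; [|split].
    + intros x [<-|Hx].
      * destruct (eq_dec a a); [left; auto | congruence].
      * destruct (eq_dec x a) as [->|]; [contradiction | right; auto].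
    + intros x x' Hx Hx' E. destruct (eq_dec x a), (eq_dec x' a); try congruence.
      * destruct Hx' as [Hx'|Hx']; [congruence | exfalso; apply Nb; rewrite E; auto].
      * destruct Hx as [Hx|Hx]; [congruence | exfalso; apply Nb; rewrite <- E; auto].
      * destruct Hx as [Hx|Hx]; [congruence|]. destruct Hx' as [Hx'|Hx']; [congruence | auto].
    + intros y [<-|Hy].
      * exists a. split; [left; auto|]. destruct (eq_dec a a); congruence.
      * destruct (S3 y Hy) as [x [Hx <-]]. exists x. split; [right; auto|].
        destruct (eq_dec x a); [subst; contradiction | auto].
Qed.

Definition swap (a b x : V) : V := if eq_dec x a then b else if eq_dec x b then a else x.

Lemma swap_l a b : swap a b a = b.
Proof. unfold swap. destruct (eq_dec a a); congruence. Qed.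

Lemma swap_other a b x : x <> a -> x <> b -> swap a b x = x.
Proof. intros. unfold swap. destruct (eq_dec x a), (eq_dec x b); congruence. Qed.

Lemma list_bij_swap l a b : In a l -> In b l -> list_bij l l (swap a b).
Proof.
  intros Ha Hb. unfold swap. split; [|split].
  - intros x Hx. destruct (eq_dec x a); auto. destruct (eq_dec x b); auto.
  - intros x x' _ _. destruct (eq_dec x a), (eq_dec x' a), (eq_dec x b), (eq_dec x' b); congruence.
  - intros y Hy. destruct (eq_dec y a) as [->|]; [|destruct (eq_dec y b) as [->|]].
    + exists b. split; auto.
      destruct (eq_dec b a); [congruence|]. destruct (eq_dec b b); congruence.
    + exists a. split; auto. destruct (eq_dec a a); congruence.
    + exists y. split; auto.
      destruct (eq_dec y a); [congruence|]. destruct (eq_dec y b); congruence.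
Qed.

Lemma list_bij_comp l1 l2 l3 s t :
  list_bij l1 l2 s -> list_bij l2 l3 t -> list_bij l1 l3 (fun x => t (s x)).
Proof.
  intros [S1 [S2 S3]] [T1 [T2 T3]]. split; [|split]; auto.
  intros y Hy. destruct (T3 y Hy) as [z [Hz <-]]. destruct (S3 z Hz) as [x [Hx <-]]. eauto.
Qed.

(* Post-compose an arbitrary bijection with two transpositions. *)
Lemma list_bij_two l1 l2 x1 x2 y1 y2 : NoDup l1 -> NoDup l2 -> length l1 = length l2 ->
  In x1 l1 -> In x2 l1 -> In y1 l2 -> In y2 l2 -> (x1 = x2 <-> y1 = y2) ->
  exists s, list_bij l1 l2 s /\ s x1 = y1 /\ s x2 = y2.
Proof.
  intros N1 N2 L H1 H2 H3 H4 Hiff.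
  destruct (list_bij_exists N1 N2 L) as [s0 B0].
  set (s1 := fun x => swap (s0 x1) y1 (s0 x)).
  assert (B1 : list_bij l1 l2 s1)
    by (apply (list_bij_comp B0), list_bij_swap; auto; apply B0; auto).
  assert (E1 : s1 x1 = y1) by apply swap_l.
  exists (fun x => swap (s1 x2) y2 (s1 x)). split; [|split].
  - apply (list_bij_comp B1), list_bij_swap; auto. apply B1; auto.
  - rewrite E1. destruct (classic (x1 = x2)) as [<-|Hne].
    + rewrite E1, swap_l. symmetry. apply Hiff. auto.
    + apply swap_other.
      * intros E. apply Hne. apply B1; auto. congruence.
      * intros E. apply Hne, Hiff, E.
  - apply swap_l.
Qed.

End ListBijections.

Section Rooted.
Variable V : Type.
Variable adj : V -> V -> Prop.
Hypothesis tree : is_tree adj.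
Variable o : V.
Local Notation dist := (Defs.dist adj).
Local Notation depth v := (dist o v).

Lemma depth_eq0 v : depth v = 0 <-> v = o.
Proof.
  split; [intros H; symmetry; apply (dist_eq0 tree); auto | intros ->; apply (dist_diag tree)].
Qed.

Lemma dist_prefix f n m : chain adj f n -> nonbacktracking f n -> m <= n -> dist (f 0) (f m) = m.
Proof.
  intros Hw Hr Hm. apply (nonbacktracking_dist tree).
  - apply (chain_le Hw Hm).
  - apply (nonbacktracking_le Hr Hm).
Qed.

(* A shortest chain from [o] to [a] followed by the edge [a b], which by hypothesis does not
   backtrack. *)
Lemma extend_shortest_chain a b : adj a b -> (depth a = 0 \/ depth b <> depth a - 1) ->
  exists f, f 0 = o /\ f (S (depth a)) = b /\ f (depth a) = a /\
    chain adj f (S (depth a)) /\ nonbacktracking f (S (depth a)).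
Proof.
  intros Hab Hb. destruct (shortest_chain tree o a) as [f [F0 [Fd [Fw Fr]]]].
  set (d := depth a) in *.
  assert (Ejoin : f d = edge a b 0) by auto.
  exists (glue f d (edge a b)). rewrite <- Nat.add_1_r.
  split; [|split; [|split; [|split]]].
  - rewrite glue_l by lia. auto.
  - rewrite glue_r by (auto; lia). replace (d + 1 - d) with 1 by lia. auto.
  - rewrite glue_l by lia. auto.
  - apply (glue_chain Ejoin Fw (chain_edge _ _ _ Hab)).
  - apply (glue_nonbacktracking Ejoin Fr (nonbacktracking_edge a b)).
    intros Hd _ E. simpl in E. destruct Hb as [Hb|Hb]; [lia|]. apply Hb.
    rewrite <- E, <- F0. apply (dist_prefix Fw Fr). lia.
Qed.

Lemma adj_depth a b : adj a b -> depth b = depth a + 1 \/ (depth a = depth b + 1 /\ a <> o).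
Proof.
  intros Hab.
  assert (Hcases : (depth a <> 0 /\ depth b = depth a - 1) \/ (depth a = 0 \/ depth b <> depth a - 1))
    by lia.
  destruct Hcases as [[Ha Hb]|Hb].
  - right. split; [lia|]. intros ->. apply Ha, depth_eq0. auto.
  - left. destruct (extend_shortest_chain Hab Hb) as [f [F0 [Fb [_ [Fw Fr]]]]].
    pose proof (nonbacktracking_dist tree Fw Fr) as E. rewrite F0, Fb in E. lia.
Qed.

Lemma parent_exists v : v <> o -> exists p, adj p v /\ depth p + 1 = depth v.
Proof.
  intros Hv. destruct (shortest_chain tree o v) as [f [F0 [Fd [Fw Fr]]]].
  set (d := depth v) in *.
  assert (d <> 0) by (intros H; apply Hv, depth_eq0; auto).
  exists (f (d - 1)). split.
  - rewrite <- Fd. replace d with (S (d - 1)) at 2 by lia. apply Fw. lia.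
  - rewrite <- F0, (dist_prefix Fw Fr) by lia. lia.
Qed.

Definition parent (v : V) : V := epsilon (inhabits o) (fun p => adj p v /\ depth p + 1 = depth v).

Lemma parent_spec v : v <> o -> adj (parent v) v /\ depth (parent v) + 1 = depth v.
Proof.
  intros Hv. apply (epsilon_spec (inhabits o) (fun p => adj p v /\ depth p + 1 = depth v)).
  apply parent_exists. auto.
Qed.

(* Two lower neighbours of [v] would give two nonbacktracking chains from [o] to [v]. *)
Lemma parent_eq p v : adj p v -> depth p + 1 = depth v -> parent v = p.
Proof.
  intros Hp Hd. assert (Hv : v <> o) by (intros ->; rewrite (dist_diag tree) in Hd; lia).
  destruct (parent_spec Hv) as [Hp' Hd'].
  assert (Hthrough : forall p, adj p v -> depth p + 1 = depth v ->
    exists f, f 0 = o /\ f (depth v) = v /\ f (depth p) = p /\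
      chain adj f (depth v) /\ nonbacktracking f (depth v)).
  { intros p' Hp'v Hd'v. rewrite <- Hd'v, Nat.add_1_r.
    apply extend_shortest_chain; [auto | lia]. }
  destruct (Hthrough p Hp Hd) as [f [F0 [Fv [Fp [Fw Fr]]]]].
  destruct (Hthrough _ Hp' Hd') as [g [G0 [Gv [Gp [Gw Gr]]]]].
  destruct (nonbacktracking_unique tree Fw Fr Gw Gr) as [_ E]; try congruence.
  rewrite <- Fp, <- Gp. replace (depth (parent v)) with (depth p) by lia. symmetry. apply E. lia.
Qed.

Lemma ray_from_depth v i : ray adj v -> v 0 = o -> depth (v i) = i.
Proof. intros Hv <-. rewrite (ray_dist tree) by (auto; lia). lia. Qed.

Lemma ray_from_parent v i : ray adj v -> v 0 = o -> parent (v (S i)) = v i.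
Proof. intros Hv V0. apply parent_eq; [apply Hv | rewrite !ray_from_depth; auto; lia]. Qed.

Record star_bij (a b : V) (s : V -> V) : Prop := {
  star_bij_adj : forall y, adj a y -> adj b (s y);
  star_bij_inj : forall y y', adj a y -> adj a y' -> s y = s y' -> y = y';
  star_bij_surj : forall y', adj b y' -> exists y, adj a y /\ s y = y' }.

Variable q : nat.
Hypothesis regular_tree : regular adj (S q).

Lemma star_bij_two a b x1 x2 y1 y2 : adj a x1 -> adj a x2 -> adj b y1 -> adj b y2 ->
  (x1 = x2 <-> y1 = y2) -> exists s, star_bij a b s /\ s x1 = y1 /\ s x2 = y2.
Proof.
  intros A1 A2 B1 B2 Hiff.
  destruct (regular_tree a) as [la [La [Na Ia]]]. destruct (regular_tree b) as [lb [Lb [Nb Ib]]].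
  destruct (list_bij_two Na Nb (eq_trans La (eq_sym Lb)) (proj1 (Ia _) A1) (proj1 (Ia _) A2)
              (proj1 (Ib _) B1) (proj1 (Ib _) B2) Hiff) as [s [[S1 [S2 S3]] [E1 E2]]].
  exists s. split; auto. split.
  - intros y Hy. apply Ib, S1, Ia. auto.
  - intros y y' Hy Hy'. apply S2; apply Ia; auto.
  - intros y' Hy'. destruct (S3 y' (proj1 (Ib _) Hy')) as [y [Hy E]].
    exists y. split; auto. apply Ia. auto.
Qed.

Variables u w : nat -> V.
Hypothesis ray_u : ray adj u.
Hypothesis ray_w : ray adj w.
Hypothesis u0 : u 0 = o.
Hypothesis w0 : w 0 = o.

Record star_map (a b : V) (s : V -> V) : Prop := {
  star_map_bij : star_bij a b s;
  star_map_parent : a <> o -> s (parent a) = parent b;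
  star_map_ray : forall i, a = u i -> b = w i -> s (u (S i)) = w (S i) }.

Lemma star_map_exists a b : depth a = depth b -> exists s, star_map a b s.
Proof.
  intros Hd.
  assert (Hu_depth : forall i j, u i = u j -> i = j).
  { intros i j E. rewrite <- (ray_from_depth i ray_u u0), E, ray_from_depth; auto. }
  destruct (classic (a = o)) as [Ao|Ao].
  - assert (Bo : b = o) by (apply depth_eq0; rewrite <- Hd; apply depth_eq0; auto).
    assert (A1 : adj a (u 1)) by (rewrite Ao, <- u0; apply ray_u).
    assert (B1 : adj b (w 1)) by (rewrite Bo, <- w0; apply ray_w).
    destruct (star_bij_two A1 A1 B1 B1) as [s [Hs [E _]]]; [tauto|].
    exists s. split; [auto | contradiction |].
    intros i Ai _. replace i with 0 by (apply Hu_depth; congruence). auto.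
  - assert (Bo : b <> o) by (intros H; apply Ao, depth_eq0; rewrite Hd; apply depth_eq0; auto).
    destruct (parent_spec Ao) as [PA _]. destruct (parent_spec Bo) as [PB _].
    apply (adj_sym tree) in PA, PB.
    destruct (classic (exists i, a = u i /\ b = w i)) as [[i [Ai Bi]]|Hnot].
    + assert (Hi : i <> 0) by (intros ->; apply Ao; rewrite Ai; auto).
      assert (Pa : parent a = u (i - 1))
        by (rewrite Ai; replace i with (S (i - 1)) at 1 by lia; apply ray_from_parent; auto).
      assert (Pb : parent b = w (i - 1))
        by (rewrite Bi; replace i with (S (i - 1)) at 1 by lia; apply ray_from_parent; auto).
      assert (AS : adj a (u (S i))) by (rewrite Ai; apply ray_u).
      assert (BS : adj b (w (S i))) by (rewrite Bi; apply ray_w).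
      destruct (star_bij_two PA AS PB BS) as [s [Hs [E1 E2]]].
      { rewrite Pa, Pb. split; intros E; exfalso.
        - apply Hu_depth in E. lia.
        - apply (f_equal (fun v => depth v)) in E. rewrite !ray_from_depth in E; auto. lia. }
      exists s. split; auto.
      intros j Aj _. replace j with i by (apply Hu_depth; congruence). auto.
    + destruct (star_bij_two PA PA PB PB) as [s [Hs [E1 _]]]; [tauto|].
      exists s. split; auto. intros j Aj Bj. exfalso. eauto.
Qed.

Definition star_choice (a b : V) : V -> V := epsilon (inhabits (fun x => x)) (star_map a b).

Lemma star_choice_spec a b : depth a = depth b -> star_map a b (star_choice a b).
Proof. intros H. unfold star_choice. apply epsilon_spec, star_map_exists, H. Qed.

(* Built outwards from [o]: the star of [v] is sent onto the star of [rot v] by a bijection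
   respecting parents and sending [u] to [w]. *)
Fixpoint rot_at (n : nat) (v : V) : V :=
  match n with
  | 0 => o
  | S n => star_choice (parent v) (rot_at n (parent v)) v
  end.

Definition rot (v : V) : V := rot_at (depth v) v.

Lemma rot_o : rot o = o.
Proof. unfold rot. rewrite (dist_diag tree). reflexivity. Qed.

Lemma rot_step v : v <> o -> rot v = star_choice (parent v) (rot (parent v)) v.
Proof.
  intros Hv. destruct (parent_spec Hv) as [_ H]. unfold rot. rewrite <- H, Nat.add_1_r. reflexivity.
Qed.

Lemma rot_depth_parent n : forall v, depth v = n ->
  depth (rot v) = n /\ (v <> o -> parent (rot v) = rot (parent v)).
Proof.
  induction n as [|n IH]; intros v Hv.
  - apply depth_eq0 in Hv. subst v. rewrite rot_o. split; [apply depth_eq0; auto | tauto].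
  - assert (Vo : v <> o) by (intros E; apply depth_eq0 in E; lia).
    destruct (parent_spec Vo) as [Pv Dp]. set (p := parent v) in *.
    destruct (IH p ltac:(lia)) as [Dk Hk].
    destruct (star_choice_spec p (rot p) ltac:(lia)) as [[S1 S2 _] S4 _].
    rewrite (rot_step Vo). fold p.
    assert (A : adj (rot p) (star_choice p (rot p) v)) by (apply S1; auto).
    destruct (adj_depth A) as [D|[D Ko]].
    + split; [lia|]. intros _. apply parent_eq; auto.
    + exfalso. assert (Po : p <> o) by (intros E; apply Ko; rewrite E, rot_o; auto).
      assert (E : parent (rot p) = star_choice p (rot p) v)
        by (apply parent_eq; [apply (adj_sym tree); auto | lia]).
      rewrite <- S4 in E by auto. destruct (parent_spec Po) as [D1 D2].
      apply S2 in E; [| apply (adj_sym tree); auto | auto]. rewrite E in D2. lia.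
Qed.

Lemma rot_depth v : depth (rot v) = depth v.
Proof. apply (rot_depth_parent (n := depth v)). auto. Qed.

Lemma rot_parent v : v <> o -> parent (rot v) = rot (parent v).
Proof. apply (rot_depth_parent (n := depth v)). auto. Qed.

Lemma rot_inj_at n : forall x y, depth x = n -> rot x = rot y -> x = y.
Proof.
  induction n as [|n IH]; intros x y Hx E.
  - apply depth_eq0 in Hx. subst x. symmetry. apply depth_eq0. rewrite <- rot_depth, <- E, rot_o.
    apply (dist_diag tree).
  - assert (Xo : x <> o) by (intros F; apply depth_eq0 in F; lia).
    assert (Yo : y <> o).
    { intros ->. rewrite rot_o in E. apply Xo, depth_eq0.
      rewrite <- rot_depth, E. apply (dist_diag tree). }
    assert (Pe : parent x = parent y).
    { apply IH; [destruct (parent_spec Xo); lia |]. rewrite <- !rot_parent by auto. congruence. }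
    rewrite (rot_step Xo), (rot_step Yo), <- Pe in E.
    destruct (parent_spec Xo) as [Ax _]. destruct (parent_spec Yo) as [Ay _].
    destruct (star_choice_spec (parent x) (rot (parent x)) (eq_sym (rot_depth _)))
      as [[_ S2 _] _ _].
    apply S2 in E; auto. rewrite Pe. auto.
Qed.

Lemma rot_inj x y : rot x = rot y -> x = y.
Proof. apply (rot_inj_at (n := depth x)). auto. Qed.

Lemma rot_adj_down a b : adj a b -> depth b = depth a + 1 -> adj (rot a) (rot b).
Proof.
  intros H D. assert (Bo : b <> o) by (intros E; apply depth_eq0 in E; lia).
  rewrite (rot_step Bo), (parent_eq H (eq_sym D)).
  apply (star_bij_adj (star_map_bij (star_choice_spec a (rot a) (eq_sym (rot_depth _))))). auto.
Qed.

Lemma rot_adj_up a b : adj (rot a) (rot b) -> depth b = depth a + 1 -> adj a b.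
Proof.
  intros H D. assert (Bo : b <> o) by (intros E; apply depth_eq0 in E; lia).
  assert (E : parent (rot b) = rot a) by (apply parent_eq; auto; rewrite !rot_depth; auto).
  rewrite rot_parent in E by auto. apply rot_inj in E. rewrite <- E. apply parent_spec. auto.
Qed.

Lemma rot_adj x y : adj x y <-> adj (rot x) (rot y).
Proof.
  split; intros H.
  - destruct (adj_depth H) as [D|[D _]]; [apply rot_adj_down; auto|].
    apply (adj_sym tree), rot_adj_down; [apply (adj_sym tree) | ]; auto.
  - destruct (adj_depth H) as [D|[D _]]; rewrite !rot_depth in D; [apply rot_adj_up; auto|].
    apply (adj_sym tree), rot_adj_up; [apply (adj_sym tree) | ]; auto.
Qed.

Lemma rot_surj_at n : forall z, depth z = n -> exists v, rot v = z.
Proof.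
  induction n as [|n IH]; intros z Hz.
  - exists o. rewrite rot_o. symmetry. apply depth_eq0. auto.
  - assert (Zo : z <> o) by (intros F; apply depth_eq0 in F; lia).
    destruct (parent_spec Zo) as [Az Dz].
    destruct (IH (parent z) ltac:(lia)) as [p Hp].
    assert (Dp : depth p = n) by (rewrite <- rot_depth, Hp; lia).
    destruct (star_choice_spec p (rot p) (eq_sym (rot_depth _))) as [[_ _ S3] S4 _].
    destruct (S3 z) as [v [Av Ev]]; [rewrite Hp; auto|].
    destruct (adj_depth Av) as [D|[D Po]].
    + exists v. assert (Vo : v <> o) by (intros F; apply depth_eq0 in F; lia).
      rewrite (rot_step Vo), (parent_eq Av (eq_sym D)). auto.
    + exfalso. assert (Hpv : parent p = v) by (apply parent_eq; [apply (adj_sym tree); auto | lia]).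
      rewrite <- Hpv, S4, Hp in Ev by auto.
      assert (Pz : parent z <> o).
      { intros F. rewrite F, (dist_diag tree) in Dz. apply Po, depth_eq0. lia. }
      destruct (parent_spec Pz) as [_ D3]. rewrite Ev in D3. lia.
Qed.

Lemma rot_aut : is_aut adj rot.
Proof.
  split; [apply rot_adj|].
  exists (fun z => epsilon (inhabits o) (fun v => rot v = z)). split.
  - intros x. apply rot_inj. apply (epsilon_spec (inhabits o) (fun v => rot v = rot x)). eauto.
  - intros z. apply (epsilon_spec (inhabits o) (fun v => rot v = z)).
    apply (rot_surj_at (n := depth z)). auto.
Qed.

Lemma rot_ray i : rot (u i) = w i.
Proof.
  induction i as [|i IH]; [rewrite u0, w0; apply rot_o|].
  assert (Uo : u (S i) <> o)
    by (intros F; apply depth_eq0 in F; rewrite ray_from_depth in F; auto; lia).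
  rewrite (rot_step Uo), ray_from_parent, IH by auto.
  apply (star_map_ray (star_choice_spec (u i) (w i) ltac:(rewrite !ray_from_depth; auto))); auto.
Qed.

End Rooted.

Lemma stabilizer_maps_ray V (adj : V -> V -> Prop) q o u w :
  is_tree adj -> regular adj (S q) -> ray adj u -> ray adj w -> u 0 = o -> w 0 = o ->
  exists k, is_aut adj k /\ k o = o /\ forall i, k (u i) = w i.
Proof.
  intros. exists (rot adj o u w). split; [|split].
  - eapply rot_aut; eauto.
  - eapply rot_o; eauto.
  - intros i. eapply rot_ray; eauto.
Qed.

Local Close Scope nat_scope.

Lemma stabilizer_moves_end V (adj : V -> V -> Prop) q o om om' :
  is_tree adj -> regular adj (S q) -> ray adj om -> ray adj om' ->
  exists k, is_aut adj k /\ k o = o /\ bequiv (fun m => k (om m)) om'.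
Proof.
  intros tree Hreg Hom Hom'.
  destruct (ray_to tree o Hom) as [u [Hu [U0 Bu]]].
  destruct (ray_to tree o Hom') as [w [Hw [W0 Bw]]].
  destruct (stabilizer_maps_ray tree Hreg Hu Hw U0 W0) as [k [Hk [Ko Kuw]]].
  exists k. split; [auto | split; [auto |]].
  apply bequiv_trans with (w := fun m => k (u m)); [apply bequiv_map, bequiv_sym; auto|].
  apply bequiv_trans with (w := w); [apply bequiv_ext; auto | auto].
Qed.

Lemma cexp_add x y : Cmult (cexp x) (cexp y) = cexp (Cplus x y).
Proof.
  destruct x as [a b], y as [c d]. unfold cexp, Cmult, Cplus. simpl.
  rewrite exp_plus, cos_plus, sin_plus. apply injective_projections; simpl; ring.
Qed.

Lemma qpow_add q z a b : qpow q z (a + b) = Cmult (qpow q z a) (qpow q z b).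
Proof.
  unfold qpow. rewrite cexp_add, plus_IZR. f_equal.
  destruct z as [z1 z2]. unfold Cmult, Cplus, RtoC. simpl.
  apply injective_projections; simpl; ring.
Qed.

Lemma iter_cancel A (f g : A -> A) : (forall x, g (f x) = x) ->
  forall n x, Nat.iter n g (Nat.iter n f x) = x.
Proof.
  intros H n. induction n as [|n IH]; intros x; [reflexivity|].
  rewrite Nat.iter_succ_r, Nat.iter_succ, H. apply IH.
Qed.

Lemma iter_aut V (adj : V -> V -> Prop) f n : is_aut adj f -> is_aut adj (Nat.iter n f).
Proof.
  intros Hf. induction n as [|n IH]; [apply aut_id | apply (aut_comp Hf IH)].
Qed.

Lemma iter_bequiv V (f : V -> V) om n :
  bequiv (fun m => f (om m)) om -> bequiv (fun m => Nat.iter n f (om m)) om.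
Proof.
  intros H. induction n as [|n IH]; [apply bequiv_ext; reflexivity|].
  eapply bequiv_trans; [apply (bequiv_map f IH) | exact H].
Qed.

Section Horocycles.
Variable V : Type.
Variable adj : V -> V -> Prop.
Hypothesis tree : is_tree adj.

Lemma bdiff_fix_end n om v x y : is_aut adj n -> ray adj om ->
  bequiv (fun m => n (om m)) om -> n v = v -> bdiff adj x (n y) om = bdiff adj x y om.
Proof.
  intros Hn Hom Bn Hv.
  rewrite (bdiff_split _ x v), (bdiff_split _ x v y).
  rewrite (bdiff_bequiv tree v (n y) (aut_ray Hn Hom) Bn).
  rewrite <- (bdiff_aut tree v y Hn Hom), Hv. reflexivity.
Qed.

Lemma end_fixing_aut_has_fixed_point n om x : is_aut adj n -> ray adj om ->
  bequiv (fun m => n (om m)) om -> bdiff adj x (n x) om = 0%Z -> exists v, n v = v.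
Proof.
  intros Hn Hom Bn Hx. pose proof Bn as [k [m H]].
  assert (Hk : n (om k) = om m) by apply (H 0%nat).
  assert (Hshift : bdiff adj (om k) (n (om k)) om = (Z.of_nat m - Z.of_nat k)%Z).
  { rewrite Hk. unfold bdiff. rewrite !(bfun_ray tree); auto. lia. }
  assert (Hzero : bdiff adj (om k) (n (om k)) om = 0%Z).
  { rewrite (bdiff_split _ (om k) x), (bdiff_split _ x (n x)), Hx.
    rewrite (bdiff_bequiv tree (n x) (n (om k)) (aut_ray Hn Hom) Bn).
    rewrite (bdiff_aut tree x (om k) Hn Hom). unfold bdiff. lia. }
  exists (om k). rewrite Hk. f_equal. lia.
Qed.

Variable o : V.

Definition horo_height (om : nat -> V) (g : V -> V) : Z := bdiff adj o (g o) (fun m => g (om m)).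

Lemma horo_height_comp om g' g : ray adj om -> is_aut adj g' -> is_aut adj g ->
  horo_height om (fun x => g' (g x)) =
    (busemann adj o (g' o) (fun m => g' (g (om m))) + horo_height om g)%Z.
Proof.
  intros Hom Hg' Hg. assert (Rg : ray adj (fun m => g (om m))) by (apply aut_ray; auto).
  unfold horo_height. rewrite (busemann_bdiff tree o (g' o) (aut_ray Hg' Rg)).
  rewrite (bdiff_split _ o (g' o)). f_equal. apply (bdiff_aut tree o (g o) Hg' Rg).
Qed.

Variable gam : Z -> V.
Hypothesis geo : geodesic adj gam.
Hypothesis gam0 : gam 0%Z = o.

Lemma geodesic_ray_p c : ray adj (fun n => gam (c + Z.of_nat n)%Z).
Proof.
  intros n. destruct (geo (c + Z.of_nat n)%Z) as [A B]. split.
  - replace (c + Z.of_nat (S n))%Z with (c + Z.of_nat n + 1)%Z by lia. auto.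
  - replace (c + Z.of_nat (S (S n)))%Z with (c + Z.of_nat n + 2)%Z by lia. auto.
Qed.

Lemma geodesic_ray_m c : ray adj (fun n => gam (c - Z.of_nat n)%Z).
Proof.
  intros n. destruct (geo (c - Z.of_nat (S n))%Z) as [A _].
  destruct (geo (c - Z.of_nat (S (S n)))%Z) as [_ B]. split.
  - replace (c - Z.of_nat (S n) + 1)%Z with (c - Z.of_nat n)%Z in A by lia.
    apply (adj_sym tree). auto.
  - replace (c - Z.of_nat (S (S n)) + 2)%Z with (c - Z.of_nat n)%Z in B by lia. auto.
Qed.

Lemma bfun_geodesic_p j : bfun adj (gam j) (fun n => gam (Z.of_nat n)) = (- j)%Z.
Proof.
  rewrite (@bfun_meet _ _ tree _ _ (fun n => gam (j + Z.of_nat n)%Z) (Z.to_nat j) (Z.to_nat (- j))).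
  - lia.
  - apply geodesic_ray_p.
  - f_equal. lia.
  - intros i. f_equal. lia.
Qed.

Lemma bfun_geodesic_m j : bfun adj (gam j) (fun n => gam (- Z.of_nat n)%Z) = j.
Proof.
  rewrite (@bfun_meet _ _ tree _ _ (fun n => gam (j - Z.of_nat n)%Z) (Z.to_nat (- j)) (Z.to_nat j)).
  - lia.
  - apply geodesic_ray_m.
  - f_equal. lia.
  - intros i. f_equal. lia.
Qed.

Variables om_p om_m : nat -> V.
Hypothesis ray_p : ray adj om_p.
Hypothesis ray_m : ray adj om_m.
Hypothesis gam_p : bequiv (fun n => gam (Z.of_nat n)) om_p.
Hypothesis gam_m : bequiv (fun n => gam (- Z.of_nat n)%Z) om_m.

Lemma bdiff_geodesic_p g a b : is_aut adj g ->
  bdiff adj (g (gam a)) (g (gam b)) (fun m => g (om_p m)) = (b - a)%Z.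
Proof.
  intros Hg. rewrite (bdiff_aut tree _ _ Hg ray_p).
  pose proof (geodesic_ray_p 0) as R0. simpl in R0.
  rewrite (bdiff_bequiv tree _ _ R0 gam_p). unfold bdiff. rewrite !bfun_geodesic_p. lia.
Qed.

Lemma bdiff_geodesic_m g a b : is_aut adj g ->
  bdiff adj (g (gam a)) (g (gam b)) (fun m => g (om_m m)) = (a - b)%Z.
Proof.
  intros Hg. rewrite (bdiff_aut tree _ _ Hg ray_m).
  pose proof (geodesic_ray_m 0) as R0. simpl in R0.
  rewrite (bdiff_bequiv tree _ _ R0 gam_m). unfold bdiff. rewrite !bfun_geodesic_m. lia.
Qed.

Variables tau taui : V -> V.
Hypothesis tau_aut : is_aut adj tau.
Hypothesis taui_tau : forall x, taui (tau x) = x.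
Hypothesis tau_taui : forall x, tau (taui x) = x.
Hypothesis tau_gam : forall n, tau (gam n) = gam (n + 1)%Z.
Hypothesis tau_p : bequiv (fun n => tau (om_p n)) om_p.
Hypothesis tau_m : bequiv (fun n => tau (om_m n)) om_m.
Local Notation tpow := (tpow tau taui).

Lemma tpow_inv j x : tpow (- j) (tpow j x) = x.
Proof. destruct j; simpl; auto; apply iter_cancel; auto. Qed.

Lemma taui_aut : is_aut adj taui.
Proof.
  destruct tau_aut as [Ha _]. split; [|exists tau; auto].
  intros x y. rewrite (Ha (taui x) (taui y)), !tau_taui. tauto.
Qed.

Lemma tpow_aut j : is_aut adj (tpow j).
Proof. destruct j; simpl; [apply aut_id | apply iter_aut; auto | apply iter_aut, taui_aut]. Qed.

Lemma tpow_bequiv j om : bequiv (fun n => tau (om n)) om -> bequiv (fun n => tpow j (om n)) om.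
Proof.
  intros H. destruct j; simpl; [apply bequiv_ext; reflexivity | apply iter_bequiv; auto |].
  apply iter_bequiv. destruct H as [k [m H]]. exists m, k. intros n. rewrite <- H. auto.
Qed.

Lemma tpow_gam j a : tpow j (gam a) = gam (a + j)%Z.
Proof.
  assert (Hup : forall n a, Nat.iter n tau (gam a) = gam (a + Z.of_nat n)%Z).
  { induction n as [|n IH]; intros b; simpl; [f_equal; lia | rewrite IH, tau_gam; f_equal; lia]. }
  assert (Hdown : forall n a, Nat.iter n taui (gam a) = gam (a - Z.of_nat n)%Z).
  { induction n as [|n IH]; intros b; simpl; [f_equal; lia|].
    rewrite IH. replace (b - Z.of_nat n)%Z with (b - Z.of_nat (S n) + 1)%Z by lia.
    rewrite <- tau_gam, taui_tau. reflexivity. }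
  destruct j; simpl; [f_equal; lia | rewrite Hup | rewrite Hdown]; f_equal; lia.
Qed.

Lemma tpow_o j : tpow j o = gam j.
Proof. rewrite <- gam0, tpow_gam. reflexivity. Qed.

Lemma horo_height_tpow_p g n : is_aut adj g ->
  horo_height om_p (fun x => g (tpow n x)) = (horo_height om_p g + n)%Z.
Proof.
  intros Hg. unfold horo_height. rewrite tpow_o.
  rewrite (bdiff_bequiv tree o (g (gam n)) (aut_ray Hg ray_p)
             (bequiv_map g (bequiv_sym (tpow_bequiv n tau_p)))).
  rewrite (bdiff_split _ o (g o)). pose proof (bdiff_geodesic_p 0 n Hg) as E.
  rewrite gam0 in E. rewrite E. lia.
Qed.

Lemma horo_height_tpow_m g n : is_aut adj g ->
  horo_height om_m (fun x => g (tpow n x)) = (horo_height om_m g - n)%Z.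
Proof.
  intros Hg. unfold horo_height. rewrite tpow_o.
  rewrite (bdiff_bequiv tree o (g (gam n)) (aut_ray Hg ray_m)
             (bequiv_map g (bequiv_sym (tpow_bequiv n tau_m)))).
  rewrite (bdiff_split _ o (g o)). pose proof (bdiff_geodesic_m 0 n Hg) as E.
  rewrite gam0 in E. rewrite E. lia.
Qed.

Variable q : nat.
Hypothesis regular_tree : regular adj (S q).

Definition iwasawa (g : V -> V) (j : Z) : Prop :=
  exists k n, is_aut adj k /\ k o = o /\
    is_aut adj n /\ bequiv (fun m => n (om_p m)) om_p /\ (exists x, n x = x) /\
    forall x, g x = k (n (tpow j x)).

Lemma iwasawa_height g j : iwasawa g j -> j = horo_height om_p g.
Proof.
  intros [k [n [Hk [Ko [Hn [Bn [[v Hv] Hg]]]]]]]. unfold horo_height.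
  set (X := fun m => n (tpow j (om_p m))).
  assert (RX : ray adj X) by (apply aut_ray; auto; apply aut_ray; [apply tpow_aut | auto]).
  assert (BX : bequiv om_p X).
  { apply bequiv_sym. eapply bequiv_trans; [apply (bequiv_map n), tpow_bequiv, tau_p | exact Bn]. }
  rewrite (bdiff_bequiv tree o (g o) (aut_ray Hk RX) (bequiv_ext _ _ (fun m => eq_sym (Hg _)))).
  rewrite Hg, tpow_o, <- Ko at 1. rewrite (bdiff_aut tree o (n (gam j)) Hk RX).
  rewrite (bdiff_bequiv tree o (n (gam j)) ray_p BX), (bdiff_fix_end o (gam j) Hn ray_p Bn Hv).
  rewrite <- gam0. pose proof (bdiff_geodesic_p 0 j (aut_id adj)) as E.
  rewrite Z.sub_0_r in E. symmetry. exact E.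
Qed.

(* [n := k^-1 g tau^-j] fixes the end [om_p] with zero horocycle shift, hence fixes a vertex. *)
Lemma iwasawa_exists g : is_aut adj g -> iwasawa g (horo_height om_p g).
Proof.
  intros Hg. set (j := horo_height om_p g).
  assert (Rg : ray adj (fun m => g (om_p m))) by (apply aut_ray; auto).
  destruct (stabilizer_moves_end o tree regular_tree ray_p Rg) as [k [Hk [Ko Bk]]].
  destruct (aut_inverse Hk) as [ki [Hki [Ki1 Ki2]]].
  set (n := fun x => ki (g (tpow (- j) x))).
  assert (Hn : is_aut adj n)
    by (unfold n; apply aut_comp; [exact Hki | apply aut_comp; [exact Hg | apply tpow_aut]]).
  assert (Bn : bequiv (fun m => n (om_p m)) om_p).
  { apply bequiv_trans with (w := fun m => ki (k (om_p m))); [|apply bequiv_ext; auto].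
    apply (bequiv_map ki). eapply bequiv_trans; [apply (bequiv_map g), tpow_bequiv, tau_p|].
    apply bequiv_sym. exact Bk. }
  exists k, n. split; [auto | split; [auto | split; [auto | split; [auto | split]]]].
  - apply (end_fixing_aut_has_fixed_point o Hn ray_p Bn).
    rewrite <- (bdiff_aut tree o (n o) Hk ray_p), Ko.
    unfold n. rewrite Ki2, tpow_o.
    rewrite (bdiff_bequiv tree o (g (gam (- j))) Rg (bequiv_sym Bk)), (bdiff_split _ o (g o)).
    pose proof (bdiff_geodesic_p 0 (- j) Hg) as E. rewrite gam0 in E. rewrite E.
    unfold j, horo_height. lia.
  - intros x. unfold n. rewrite Ki2, tpow_inv. reflexivity.
Qed.

Lemma Hproj_horo_height g : is_aut adj g -> Hproj adj o om_p tau taui g = horo_height om_p g.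
Proof.
  intros Hg. apply iwasawa_height.
  apply (epsilon_spec (inhabits 0%Z) (iwasawa g)). exists (horo_height om_p g).
  apply iwasawa_exists. auto.
Qed.

Variable r : V -> V.
Hypothesis r_aut : is_aut adj r.
Hypothesis r_o : r o = o.
Hypothesis r_tpow : forall j x, r (tpow j (r x)) = tpow (- j) x.

Lemma r_gam j : r (gam j) = gam (- j)%Z.
Proof. pose proof (r_tpow j o) as H. rewrite r_o, !tpow_o in H. exact H. Qed.

Lemma r_end : bequiv (fun m => r (om_p m)) om_m.
Proof.
  apply bequiv_trans with (w := fun n => r (gam (Z.of_nat n))).
  - apply bequiv_map, bequiv_sym, gam_p.
  - apply bequiv_trans with (w := fun n => gam (- Z.of_nat n)%Z); [|exact gam_m].
    apply bequiv_ext. intros n. apply r_gam.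
Qed.

Lemma horo_height_r g : is_aut adj g -> horo_height om_p (fun x => g (r x)) = horo_height om_m g.
Proof.
  intros Hg. unfold horo_height. rewrite r_o.
  apply (bdiff_bequiv tree o (g o) (aut_ray Hg ray_m)), bequiv_map, bequiv_sym, r_end.
Qed.

Lemma dss_horo_height s s' g : is_aut adj g ->
  dss adj q o om_p tau taui r s s' g =
    Cmult (qpow (INR q) (half_is s) (horo_height om_p g))
          (qpow (INR q) (half_is s') (horo_height om_m g)).
Proof.
  intros Hg. unfold dss.
  rewrite (Hproj_horo_height Hg), (Hproj_horo_height (aut_comp Hg r_aut)), (horo_height_r Hg).
  reflexivity.
Qed.

Lemma dss_comp s s' g g' : is_aut adj g -> is_aut adj g' ->
  dss adj q o om_p tau taui r s s' (fun x => g' (g x)) =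
    Cmult (Cmult (qpow (INR q) (half_is s) (busemann adj o (g' o) (fun m => g' (g (om_p m)))))
                 (qpow (INR q) (half_is s') (busemann adj o (g' o) (fun m => g' (g (om_m m))))))
          (dss adj q o om_p tau taui r s s' g).
Proof.
  intros Hg Hg'. rewrite !dss_horo_height by (auto using aut_comp).
  rewrite (horo_height_comp ray_p Hg' Hg), (horo_height_comp ray_m Hg' Hg), !qpow_add. ring.
Qed.

Lemma dss_tpow s s' g n : is_aut adj g ->
  dss adj q o om_p tau taui r s s' (fun x => g (tpow n x)) =
    Cmult (Cmult (qpow (INR q) (half_is s) n) (qpow (INR q) (half_is s') (- n)))
          (dss adj q o om_p tau taui r s s' g).
Proof.
  intros Hg. rewrite !dss_horo_height by (auto using aut_comp, tpow_aut).
  rewrite horo_height_tpow_p, horo_height_tpow_m, <- Z.add_opp_r, !qpow_add by auto. ring.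
Qed.

End Horocycles.

Theorem lemma3p2 (V : Type) (adj : V -> V -> Prop) (q : nat) (o : V)
  (om_m om_p : nat -> V) (gam : Z -> V) (tau taui r : V -> V) :
  (2 <= q)%nat ->
  is_tree adj -> regular adj (S q) ->
  ray adj om_m -> ray adj om_p -> ~ bequiv om_m om_p ->
  (* o lies on the geodesic ]om_m, om_p[ , parametrized by gam with gam 0 = o *)
  geodesic adj gam -> gam 0%Z = o ->
  bequiv (fun n => gam (Z.of_nat n)) om_p ->
  bequiv (fun n => gam (- Z.of_nat n)%Z) om_m ->
  (* tau : automorphism fixing om_pm, translating the geodesic one step to om_p *)
  is_aut adj tau -> (forall x, taui (tau x) = x) -> (forall x, tau (taui x) = x) ->
  bequiv (fun n => tau (om_p n)) om_p -> bequiv (fun n => tau (om_m n)) om_m ->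
  (forall n, tau (gam n) = gam (n + 1)%Z) ->
  (* r in K, r^2 = id, r tau^j r^-1 = tau^-j *)
  is_aut adj r -> r o = o -> (forall x, r (r x) = x) ->
  (forall j x, r (tpow tau taui j (r x)) = tpow tau taui (- j) x) ->
  forall (s s' : C) (g g' : V -> V) (n : Z),
  is_aut adj g -> is_aut adj g' ->
  dss adj q o om_p tau taui r s s' (fun x => g' (g x)) =
    Cmult (Cmult (qpow (INR q) (half_is s) (busemann adj o (g' o) (fun m => g' (g (om_p m)))))
                 (qpow (INR q) (half_is s') (busemann adj o (g' o) (fun m => g' (g (om_m m))))))
          (dss adj q o om_p tau taui r s s' g)
  /\
  dss adj q o om_p tau taui r s s' (fun x => g (tpow tau taui n x)) =
    Cmult (Cmult (qpow (INR q) (half_is s) n) (qpow (INR q) (half_is s') (- n)))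
          (dss adj q o om_p tau taui r s s' g).
Proof.
  intros _ tree Hreg ray_m ray_p _ geo gam0 gam_p gam_m tau_aut taui_tau tau_taui tau_p tau_m
    tau_gam r_aut r_o _ r_tpow s s' g g' n Hg Hg'.
  split.
  - exact (dss_comp tree geo gam0 ray_p ray_m gam_p gam_m taui tau_aut taui_tau tau_taui tau_gam
             tau_p Hreg r_aut r_o r_tpow s s' Hg Hg').
  - exact (dss_tpow tree geo gam0 ray_p ray_m gam_p gam_m taui tau_aut taui_tau tau_taui tau_gam
             tau_p tau_m Hreg r_aut r_o r_tpow s s' n Hg).
Qed.
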